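(* Let $G\in\mathrm{C}^1(\mathbb{R})$ be coercive, $V\in\mathrm{Lip}(\mathbb{R})$ $1$-periodic, $\theta\in\mathbb{R}$, and let $\overline{H}$, $f_\theta$, $I_\theta$, $B_\theta$, $b(\theta)$ be as in the context (with $I_\theta(1)\neq0$). (a) If $I_\theta(1)>0$, then for all sufficiently small $h>0$ there is $\theta^*\in(\theta,\theta+hb(\theta))$ with $\overline{H}(\theta^* )=\overline{H}(\theta)+h/2>\overline{H}(\theta)$. (b) If $I_\theta(1)<0$, then for all sufficiently small $h>0$ there is $\theta^*\in(\theta-hb(\theta),\theta)$ with $\overline{H}(\theta^* )=\overline{H}(\theta)+h/2>\overline{H}(\theta)$.
   Context: $G$ coercive means $G(p)\to\infty$ as $p\to\pm\infty$. For each $\theta\in\mathbb{R}$, $\overline{H}(\theta)\in\mathbb{R}$ and the $1$-periodic $f_\theta\in\mathrm{C}^1(\mathbb{R})$ are the unique number and function with $\int_0^1 f_\theta=\theta$ and $f_\theta'(x)+G(f_\theta(x))+V(x)=\overline{H}(\theta)$ for all $x$. Set $I_\theta(x)=\int_0^x G'(f_\theta(y))\,dy$ and $B_\theta(x)=\int_0^x e^{I_\theta(y)}dy$. When $I_\theta(1)\ne0$, let $g_\theta(x)=s\big(B_\theta(x)+\frac{B_\theta(1)}{e^{I_\theta(1)}-1}\big)e^{-I_\theta(x)}$ where $s=1$ if $I_\theta(1)>0$ and $s=-1$ if $I_\theta(1)<0$; this is the $1$-periodic positive $\mathrm{C}^1$ solution of $g'+G'(f_\theta)g=s$. Define $b(\theta)=\int_0^1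 g_\theta(x)\,dx>0$. *)

From Stdlib Require Import Reals.
From Coquelicot Require Import Coquelicot.
Open Scope R_scope.

Definition is_C1 (f : R -> R) : Prop :=
  (forall x, ex_derive f x) /\ (forall x, continuous (Derive f) x).

Definition coercive (G : R -> R) : Prop :=
  filterlim G (Rbar_locally p_infty) (Rbar_locally p_infty) /\
  filterlim G (Rbar_locally m_infty) (Rbar_locally p_infty).

Definition lipschitz (V : R -> R) : Prop :=
  exists L, forall x y, Rabs (V x - V y) <= L * Rabs (x - y).

Definition periodic1 (f : R -> R) : Prop := forall x, f (x + 1) = f x.

Definition cell_solution (G V : R -> R) (Hbar : R -> R) (f : R -> R -> R) (th : R) : Prop :=
  periodic1 (f th) /\ is_C1 (f th) /\ RInt (f th) 0 1 = th /\
  forall x, Derive (f th) x + G (f th x) + V x = Hbar th.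

Definition Ith (G : R -> R) (f : R -> R -> R) (th x : R) : R :=
  RInt (fun y => Derive G (f th y)) 0 x.

Definition Bth (G : R -> R) (f : R -> R -> R) (th x : R) : R :=
  RInt (fun y => exp (Ith G f th y)) 0 x.

Definition sgn_th (G : R -> R) (f : R -> R -> R) (th : R) : R :=
  if Rlt_dec 0 (Ith G f th 1) then 1 else -1.

Definition gth (G : R -> R) (f : R -> R -> R) (th x : R) : R :=
  sgn_th G f th *
  (Bth G f th x + Bth G f th 1 / (exp (Ith G f th 1) - 1)) *
  exp (- Ith G f th x).

Definition bth (G : R -> R) (f : R -> R -> R) (th : R) : R :=
  RInt (gth G f th) 0 1.

(* Let s be the sign of I_θ(1).  Since g_θ' + G'(f_θ) g_θ = s, the periodic function
   u = f_θ + s h g_θ has mean θ + s h b(θ), and a first-order expansion of G, uniform on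
   a period, gives u' + G(u) + V > H̄(θ) + h/2 for small h > 0.  A comparison principle
   turns this into H̄(θ + s h b(θ)) > H̄(θ) + h/2: the periodic zero-mean function u - f_ψ
   (ψ the mean of u) vanishes at some point where it is nonincreasing, and there the cell
   equation for f_ψ gives u' + G(u) + V <= H̄(ψ).  The same principle applied to the
   translates f_ψ + c shows that H̄ is continuous, and the intermediate value theorem
   then produces θ*. *)

From Stdlib Require Import Reals Lra Classical.
From Coquelicot Require Import Coquelicot.
Open Scope R_scope.

Lemma ex_RInt_of_continuous (u : R -> R) (a b : R) :
  (forall x, continuous u x) -> ex_RInt u a b.
Proof. intro Hc. apply (ex_RInt_continuous (V := R_CompleteNormedModule)). intros; apply Hc. Qed.

Lemma ex_RInt_of_ex_derive (u : R -> R) (a b : R) :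
  (forall x, ex_derive u x) -> ex_RInt u a b.
Proof. intro Hu. apply ex_RInt_of_continuous. intro x. apply (ex_derive_continuous u), Hu. Qed.

Lemma continuous_pos_near (d : R -> R) (z : R) :
  continuous d z -> 0 < d z ->
  exists eta, 0 < eta /\ forall t, Rabs (t - z) < eta -> 0 < d t.
Proof.
  intros Hc Hz.
  destruct (Hc _ (open_gt 0 (d z) Hz)) as [eta Heta].
  exists eta; split; [apply cond_pos|]. intros t Ht. apply Heta. exact Ht.
Qed.

Lemma IVT_strict (F : R -> R) (a b y : R) :
  (forall x, continuous F x) -> a < b -> (F a < y < F b \/ F b < y < F a) ->
  exists x, a < x < b /\ F x = y.
Proof.
  intros Hc Hab Hy.
  assert (Hc' : continuity F) by (intro x; apply continuity_pt_filterlim, Hc).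
  destruct (IVT_gen F a b y Hc') as [x [Hx HFx]].
  { destruct Hy; [rewrite Rmin_left, Rmax_right | rewrite Rmin_right, Rmax_left]; lra. }
  rewrite Rmin_left, Rmax_right in Hx by lra.
  exists x; split; [|exact HFx].
  split; apply Rnot_le_lt; intro; [replace x with a in HFx | replace x with b in HFx]; lra.
Qed.

Lemma first_zero_after (d : R -> R) (p q : R) :
  (forall x, continuous d x) -> p < q -> 0 < d p -> d q < 0 ->
  exists z, p < z < q /\ d z = 0 /\ forall t, p <= t < z -> 0 < d t.
Proof.
  intros Hc Hpq Hp Hq.
  set (T := fun x => p <= x <= q /\ forall t, p <= t <= x -> 0 < d t).
  assert (HpT : T p) by (split; [lra|intros t Ht; replace t with p by lra; exact Hp]).
  destruct (completeness T) as [z [Hub Hlub]].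
  { exists q. intros x Hx. apply Hx. }
  { exists p. exact HpT. }
  assert (Hpz : p <= z) by (apply Hub, HpT).
  assert (Hzq : z <= q) by (apply Hlub; intros x Hx; apply Hx).
  assert (Hbelow : forall t, p <= t < z -> 0 < d t).
  { intros t Ht. apply Rnot_le_lt. intro Hdt.
    enough (z <= t) by lra.
    apply Hlub. intros x [_ Hx]. apply Rnot_lt_le. intro Htx.
    specialize (Hx t ltac:(lra)). lra. }
  assert (Hz : d z = 0).
  { destruct (Rtotal_order (d z) 0) as [Hneg|[Hzero|Hpos]]; [| exact Hzero |].
    - destruct (IVT_strict (fun x => - d x) p z 0) as [w [Hw Hdw]].
      { intro x. apply (continuous_opp d), Hc. }
      { destruct (Req_dec p z) as [<-|]; lra. }
      { lra. }
      specialize (Hbelow w ltac:(lra)). lra.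
    - destruct (continuous_pos_near d z (Hc z) Hpos) as [eta [Heta Hnear]].
      assert (Hz' : T (Rmin (z + eta / 2) q)).
      { split; [split; [apply Rmin_glb; lra | apply Rmin_r]|].
        intros t Ht. destruct (Rlt_le_dec t z); [apply Hbelow; lra|].
        apply Hnear. apply Rabs_lt_between'.
        pose proof (Rmin_l (z + eta / 2) q). lra. }
      apply Hub in Hz'. revert Hz'. apply Rmin_case; intros; [lra|].
      replace z with q in Hpos by lra. lra. }
  exists z. split; [|split; [exact Hz|exact Hbelow]].
  split; apply Rnot_le_lt; intro; [replace z with p in Hz|replace z with q in Hz]; lra.
Qed.

Lemma Derive_pos_crossing (d : R -> R) (y : R) :
  ex_derive d y -> 0 < Derive d y ->
  exists del, 0 < del /\ forall h, 0 < h < del -> d (y - h) < d y < d (y + h).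
Proof.
  intros Hd Hpos.
  apply Derive_correct, is_derive_Reals in Hd.
  destruct (Hd _ Hpos) as [del Hdel].
  exists del; split; [apply cond_pos|]. intros h Hh.
  assert (Hquot : forall k, k <> 0 -> Rabs k < del -> 0 < (d (y + k) - d y) / k).
  { intros k Hk0 Hk. specialize (Hdel k Hk0 Hk). apply Rabs_lt_between' in Hdel. lra. }
  pose proof (Hquot h ltac:(lra) ltac:(rewrite Rabs_pos_eq; lra)) as Hright.
  pose proof (Hquot (- h) ltac:(lra) ltac:(rewrite Rabs_Ropp, Rabs_pos_eq; lra)) as Hleft.
  pose proof (Rmult_lt_0_compat h _ (proj1 Hh) Hleft) as Hl.
  pose proof (Rmult_lt_0_compat h _ (proj1 Hh) Hright) as Hr.
  replace (h * _) with (d y - d (y - h)) in Hl by (rewrite <- Rminus_def; field; lra).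
  replace (h * _) with (d (y + h) - d y) in Hr by (field; lra).
  lra.
Qed.

Lemma zero_with_nonpos_Derive (d : R -> R) (a b : R) :
  (forall x, ex_derive d x) -> a < b -> d a = 0 -> d b = 0 ->
  exists z, a <= z <= b /\ d z = 0 /\ Derive d z <= 0.
Proof.
  intros Hd Hab Ha Hb. apply NNPP. intro Hno.
  (* Otherwise d is positive just after a and negative just before b, and its first
     zero in between is crossed downwards. *)
  assert (Hup : forall z, a <= z <= b -> d z = 0 -> 0 < Derive d z).
  { intros z Hz Hdz. apply Rnot_le_lt. intro. apply Hno. now exists z. }
  destruct (Derive_pos_crossing d a (Hd a) (Hup a ltac:(lra) Ha)) as [del1 [Hdel1 Ca]].
  destruct (Derive_pos_crossing d b (Hd b) (Hup b ltac:(lra) Hb)) as [del2 [Hdel2 Cb]].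
  set (e := Rmin (Rmin del1 del2) (b - a) / 3).
  assert (He : 0 < e /\ e < del1 /\ e < del2 /\ 2 * e < b - a).
  { assert (0 < Rmin (Rmin del1 del2) (b - a)) by (repeat apply Rmin_glb_lt; lra).
    pose proof (Rmin_l (Rmin del1 del2) (b - a)). pose proof (Rmin_r (Rmin del1 del2) (b - a)).
    pose proof (Rmin_l del1 del2). pose proof (Rmin_r del1 del2).
    unfold e. lra. }
  destruct (first_zero_after d (a + e) (b - e)) as [z [Hz [Hdz Hbelow]]].
  { intro x. apply (ex_derive_continuous d), Hd. }
  { lra. }
  { specialize (Ca e ltac:(lra)). lra. }
  { specialize (Cb e ltac:(lra)). lra. }
  destruct (Derive_pos_crossing d z (Hd z) (Hup z ltac:(lra) Hdz)) as [del3 [Hdel3 Cz]].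
  set (h := Rmin (del3 / 2) ((z - (a + e)) / 2)).
  assert (Hh : 0 < h < del3 /\ h <= (z - (a + e)) / 2)
    by (unfold h; apply Rmin_case_strong; intros; lra).
  specialize (Cz h ltac:(lra)). specialize (Hbelow (z - h) ltac:(lra)). lra.
Qed.

Lemma pos_on_segment_of_no_root (d : R -> R) (a b : R) :
  (forall x, continuous d x) -> (forall x, a <= x <= b -> d x <> 0) -> 0 < d a ->
  forall x, a <= x <= b -> 0 < d x.
Proof.
  intros Hc Hne Ha x Hx. apply Rnot_le_lt. intro Hdx.
  assert (Hneg : d x < 0) by (destruct Hdx; [assumption | exfalso; now apply (Hne x)]).
  assert (Hax : a < x) by (destruct (Req_dec a x) as [<-|]; lra).
  destruct (IVT_strict d a x 0 Hc Hax) as [w [Hw Hdw]]; [lra|].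
  now apply (Hne w); [lra|].
Qed.

Lemma RInt_eq_0_root (d : R -> R) (a b : R) :
  (forall x, continuous d x) -> a < b -> RInt d a b = 0 ->
  exists x, a <= x <= b /\ d x = 0.
Proof.
  intros Hc Hab Hint. apply NNPP. intro Hno.
  assert (Hne : forall x, a <= x <= b -> d x <> 0) by (intros x Hx Hdx; apply Hno; now exists x).
  assert (Hcn : forall x, continuous (fun y => - d y) x) by (intro; apply (continuous_opp d), Hc).
  destruct (Rtotal_order (d a) 0) as [Hneg|[Hzero|Hpos]].
  - assert (Hpos : 0 < RInt (fun y => - d y) a b).
    { apply RInt_gt_0; [exact Hab| |intros; apply Hcn].
      intros x Hx. apply (pos_on_segment_of_no_root (fun y => - d y) a b Hcn); try lra.
      intros y Hy. specialize (Hne y Hy). lra. }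
    rewrite (RInt_opp d) in Hpos by now apply ex_RInt_of_continuous.
    change (0 < - RInt d a b) in Hpos. lra.
  - exact (Hne a ltac:(lra) Hzero).
  - assert (0 < RInt d a b); [|lra].
    apply RInt_gt_0; [exact Hab| |intros; apply Hc].
    intros x Hx. apply (pos_on_segment_of_no_root d a b Hc Hne Hpos). lra.
Qed.

Lemma periodic_zero_mean_downcrossing (d : R -> R) :
  (forall x, ex_derive d x) -> periodic1 d -> RInt d 0 1 = 0 ->
  exists z, 0 <= z <= 2 /\ d z = 0 /\ Derive d z <= 0.
Proof.
  intros Hd Hper Hmean.
  destruct (RInt_eq_0_root d 0 1) as [x0 [Hx0 Hdx0]]; [|lra|exact Hmean|].
  { intro x. apply (ex_derive_continuous d), Hd. }
  destruct (zero_with_nonpos_Derive d x0 (x0 + 1) Hd) as [z [Hz Hdz]];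
    [lra | exact Hdx0 | now rewrite Hper |].
  exists z. split; [lra | exact Hdz].
Qed.

Lemma bounded_on_segment (F : R -> R) (a b : R) :
  (forall x, continuous F x) ->
  exists M, 0 < M /\ forall x, a <= x <= b -> Rabs (F x) <= M.
Proof.
  intro Hc. destruct (Rle_dec a b) as [Hab|Hba].
  - destruct (continuity_ab_maj (fun x => Rabs (F x)) a b Hab) as [xM [HM _]].
    { intros x _. apply continuity_pt_filterlim.
      apply (continuous_comp F Rabs); [apply Hc | apply continuous_Rabs]. }
    exists (Rabs (F xM) + 1). split; [pose proof (Rabs_pos (F xM)); lra|].
    intros x Hx. specialize (HM x Hx). lra.
  - exists 1. split; [lra|]. intros x Hx. lra.
Qed.

Lemma uniform_continuity_on_segment (F : R -> R) (A B eps : R) :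
  (forall x, continuous F x) -> 0 < eps ->
  exists del, 0 < del /\ forall x y, A <= x <= B -> A <= y <= B ->
    Rabs (x - y) < del -> Rabs (F x - F y) < eps.
Proof.
  intros Hc Heps.
  destruct (Heine F (fun x => A <= x <= B) (compact_P3 A B)
              (fun x _ => proj2 (continuity_pt_filterlim F x) (Hc x)) (mkposreal eps Heps))
    as [del Hdel].
  exists del. split; [apply cond_pos|]. intros x y Hx Hy Hxy. exact (Hdel x y Hx Hy Hxy).
Qed.

Lemma uniform_first_order_expansion (G : R -> R) (A B eps : R) :
  is_C1 G -> 0 < eps ->
  exists del, 0 < del /\ forall y k, A <= y <= B -> Rabs k < del ->
    Rabs (G (y + k) - G y - k * Derive G y) <= eps * Rabs k.
Proof.
  intros [HGd HGc] Heps.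
  destruct (uniform_continuity_on_segment (Derive G) (A - 1) (B + 1) eps HGc Heps)
    as [del [Hdel Hunif]].
  exists (Rmin del 1). split; [apply Rmin_glb_lt; lra|].
  intros y k Hy Hk.
  pose proof (Rmin_l del 1). pose proof (Rmin_r del 1).
  destruct (MVT_gen G y (y + k) (Derive G)) as [c [Hc HMVT]].
  { intros x _. apply Derive_correct, HGd. }
  { intros x _. apply continuity_pt_filterlim, (ex_derive_continuous G), HGd. }
  assert (Hcy : Rabs (c - y) <= Rabs k).
  { rewrite Rmin_comm, Rmax_comm in Hc.
    replace (Rabs k) with (Rabs (y + k - y)) by (f_equal; ring).
    now apply Rabs_le_between_min_max. }
  replace (G (y + k) - G y - k * Derive G y) with (k * (Derive G c - Derive G y))
    by (rewrite HMVT; ring).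
  rewrite Rabs_mult, Rmult_comm.
  apply Rmult_le_compat_r; [apply Rabs_pos|]. left.
  assert (Hcy' : Rabs (c - y) < Rmin del 1) by lra.
  apply Rabs_lt_between' in Hcy'.
  apply Hunif; [lra | lra | apply Rabs_lt_between'; lra].
Qed.

Lemma is_derive_RInt_from_0 (phi : R -> R) (x : R) :
  (forall y, continuous phi y) -> is_derive (fun y => RInt phi 0 y) x (phi x).
Proof.
  intro Hc. apply (is_derive_RInt phi _ 0 x); [|apply Hc].
  apply filter_forall. intro y.
  apply (RInt_correct (V := R_CompleteNormedModule)). now apply ex_RInt_of_continuous.
Qed.

Lemma RInt_0_add1 (phi : R -> R) (x : R) :
  (forall y, continuous phi y) ->
  RInt phi 0 (x + 1) = RInt phi 0 1 + RInt (fun y => phi (y + 1)) 0 x.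
Proof.
  intro Hc.
  assert (Hex : forall a b, ex_RInt phi a b) by (intros; now apply ex_RInt_of_continuous).
  rewrite <- (RInt_Chasles (V := R_CompleteNormedModule) phi 0 1 (x + 1)) by apply Hex.
  change (RInt phi 0 1 + RInt phi 1 (x + 1) = RInt phi 0 1 + RInt (fun y => phi (y + 1)) 0 x).
  f_equal.
  pose proof (RInt_comp_lin (V := R_CompleteNormedModule) phi 1 1 0 x (Hex _ _)) as Hlin.
  replace (1 * 0 + 1) with 1 in Hlin by ring. replace (1 * x + 1) with (x + 1) in Hlin by ring.
  rewrite <- Hlin. apply RInt_ext. intros y _.
  change (1 * phi (1 * y + 1) = phi (y + 1)). now rewrite !Rmult_1_l.
Qed.

Section Corrector.

Variables (G : R -> R) (f : R -> R -> R) (th : R).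
Hypothesis HG : is_C1 G.
Hypothesis Hfd : forall x, ex_derive (f th) x.
Hypothesis Hper : periodic1 (f th).
Hypothesis HI : Ith G f th 1 <> 0.

Lemma continuous_Derive_G_f (x : R) : continuous (fun y => Derive G (f th y)) x.
Proof.
  apply (continuous_comp (f th) (Derive G)); [apply (ex_derive_continuous (f th)), Hfd | apply HG].
Qed.

Lemma is_derive_Ith (x : R) : is_derive (Ith G f th) x (Derive G (f th x)).
Proof. exact (is_derive_RInt_from_0 _ x continuous_Derive_G_f). Qed.

Lemma Ith_add1 (x : R) : Ith G f th (x + 1) = Ith G f th x + Ith G f th 1.
Proof.
  unfold Ith at 1. rewrite RInt_0_add1 by exact continuous_Derive_G_f.
  rewrite Rplus_comm. f_equal. apply RInt_ext. intros y _. now rewrite Hper.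
Qed.

Lemma continuous_exp_Ith (x : R) : continuous (fun y => exp (Ith G f th y)) x.
Proof.
  apply (continuous_comp (Ith G f th) exp).
  - apply (ex_derive_continuous (Ith G f th)). eexists. apply is_derive_Ith.
  - apply (ex_derive_continuous exp). auto_derive. exact I.
Qed.

Lemma is_derive_Bth (x : R) : is_derive (Bth G f th) x (exp (Ith G f th x)).
Proof. exact (is_derive_RInt_from_0 _ x continuous_exp_Ith). Qed.

Lemma Bth_add1 (x : R) :
  Bth G f th (x + 1) = Bth G f th 1 + exp (Ith G f th 1) * Bth G f th x.
Proof.
  unfold Bth at 1. rewrite RInt_0_add1 by exact continuous_exp_Ith. f_equal.
  transitivity (RInt (fun y => scal (exp (Ith G f th 1)) (exp (Ith G f th y))) 0 x).
  - apply RInt_ext. intros y _.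
    change (exp (Ith G f th (y + 1)) = exp (Ith G f th 1) * exp (Ith G f th y)).
    now rewrite Ith_add1, exp_plus, Rmult_comm.
  - apply (RInt_scal (V := R_CompleteNormedModule)).
    apply ex_RInt_of_continuous, continuous_exp_Ith.
Qed.

Lemma Bth_1_pos : 0 < Bth G f th 1.
Proof.
  apply RInt_gt_0; [lra | intros; apply exp_pos | intros; apply continuous_exp_Ith].
Qed.

Lemma Bth_bounds (x : R) : 0 <= x <= 1 -> 0 <= Bth G f th x <= Bth G f th 1.
Proof.
  intro Hx.
  assert (Hnonneg : forall a b, a <= b -> 0 <= RInt (fun y => exp (Ith G f th y)) a b).
  { intros a b Hab. apply RInt_ge_0; [exact Hab | |intros; left; apply exp_pos].
    apply ex_RInt_of_continuous, continuous_exp_Ith. }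
  unfold Bth.
  rewrite <- (RInt_Chasles (V := R_CompleteNormedModule) _ 0 x 1)
    by apply ex_RInt_of_continuous, continuous_exp_Ith.
  change (plus ?a ?b) with (a + b).
  pose proof (Hnonneg 0 x ltac:(lra)). pose proof (Hnonneg x 1 ltac:(lra)). lra.
Qed.

Lemma sgn_th_spec :
  (0 < Ith G f th 1 /\ sgn_th G f th = 1) \/ (Ith G f th 1 < 0 /\ sgn_th G f th = -1).
Proof.
  unfold sgn_th. destruct (Rlt_dec 0 (Ith G f th 1)); [left | right]; split; auto.
  destruct (Rtotal_order (Ith G f th 1) 0) as [|[|]]; [assumption | contradiction | contradiction].
Qed.

Lemma sgn_th_sqr : sgn_th G f th * sgn_th G f th = 1.
Proof. destruct sgn_th_spec as [[_ ->] | [_ ->]]; ring. Qed.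

Lemma Rabs_sgn_th : Rabs (sgn_th G f th) = 1.
Proof.
  destruct sgn_th_spec as [[_ ->] | [_ ->]]; [apply Rabs_R1|].
  rewrite Rabs_left by lra. ring.
Qed.

Lemma is_derive_gth (x : R) :
  is_derive (gth G f th) x (sgn_th G f th - Derive G (f th x) * gth G f th x).
Proof.
  unfold gth.
  set (s := sgn_th G f th). set (K := Bth G f th 1 / (exp (Ith G f th 1) - 1)).
  assert (Hl : is_derive (fun y => s * (Bth G f th y + K)) x (s * (exp (Ith G f th x) + 0))).
  { apply is_derive_scal, (is_derive_plus (Bth G f th) (fun _ => K));
      [apply is_derive_Bth | exact (is_derive_const (K := R_AbsRing) (V := R_NormedModule) K x)]. }
  assert (Hr : is_derive (fun y => exp (- Ith G f th y)) x
                 (- Derive G (f th x) * exp (- Ith G f th x))).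
  { apply (is_derive_comp exp (fun y => - Ith G f th y)); [apply is_derive_exp|].
    apply (is_derive_opp (Ith G f th)), is_derive_Ith. }
  pose proof (is_derive_mult _ _ x _ _ Hl Hr Rmult_comm) as Hprod.
  evar (l : R). replace (s - _) with l; [exact Hprod|].
  unfold l, plus, mult; simpl. rewrite exp_Ropp.
  pose proof (exp_pos (Ith G f th x)). field. lra.
Qed.

Lemma exp_Ith_1_neq_1 : exp (Ith G f th 1) - 1 <> 0.
Proof. intro E. apply HI, exp_inv. rewrite exp_0. lra. Qed.

Lemma gth_periodic : periodic1 (gth G f th).
Proof.
  intro x. unfold gth. rewrite Ith_add1, Bth_add1, Ropp_plus_distr, exp_plus, !exp_Ropp.
  pose proof exp_Ith_1_neq_1.
  pose proof (exp_pos (Ith G f th 1)). pose proof (exp_pos (Ith G f th x)).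
  field. split; lra.
Qed.

Lemma gth_pos (x : R) : 0 <= x <= 1 -> 0 < gth G f th x.
Proof.
  intro Hx. unfold gth.
  pose proof (Bth_bounds x Hx). pose proof Bth_1_pos.
  pose proof (exp_pos (- Ith G f th x)).
  assert (He0 : 0 < exp (Ith G f th 1)) by apply exp_pos.
  assert (HK : Bth G f th 1 / (exp (Ith G f th 1) - 1) * (exp (Ith G f th 1) - 1)
               = Bth G f th 1) by (field; exact exp_Ith_1_neq_1).
  set (e := exp (Ith G f th 1)) in *.
  set (K := Bth G f th 1 / (e - 1)) in *.
  apply Rmult_lt_0_compat; [|assumption].
  destruct sgn_th_spec as [[HIpos ->] | [HIneg ->]].
  - pose proof (exp_increasing _ _ HIpos) as He. rewrite exp_0 in He. fold e in He. nra.
  - pose proof (exp_increasing _ _ HIneg) as He. rewrite exp_0 in He. fold e in He. nra.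
Qed.

Lemma bth_pos : 0 < bth G f th.
Proof.
  apply RInt_gt_0; [lra | intros; apply gth_pos; lra |].
  intros x _. apply (ex_derive_continuous (gth G f th)). eexists. apply is_derive_gth.
Qed.

Definition perturbed_f (h x : R) : R := f th x + sgn_th G f th * h * gth G f th x.

Lemma is_derive_perturbed_f (h x : R) :
  is_derive (perturbed_f h) x
    (Derive (f th) x + sgn_th G f th * h * (sgn_th G f th - Derive G (f th x) * gth G f th x)).
Proof.
  apply (is_derive_plus (f th) (fun y => sgn_th G f th * h * gth G f th y));
    [apply Derive_correct, Hfd | apply is_derive_scal, is_derive_gth].
Qed.

Lemma perturbed_f_periodic (h : R) : periodic1 (perturbed_f h).
Proof. intro x. unfold perturbed_f. now rewrite Hper, gth_periodic. Qed.

Lemma RInt_perturbed_f (h : R) :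
  RInt (perturbed_f h) 0 1 = RInt (f th) 0 1 + sgn_th G f th * h * bth G f th.
Proof.
  assert (Hg : forall x, ex_derive (gth G f th) x) by (intro; eexists; apply is_derive_gth).
  unfold perturbed_f.
  rewrite (RInt_plus (V := R_CompleteNormedModule) (f th) (fun y => _ * gth G f th y)).
  - now rewrite (RInt_scal (V := R_CompleteNormedModule)) by now apply ex_RInt_of_ex_derive.
  - now apply ex_RInt_of_ex_derive.
  - apply (ex_RInt_scal (V := R_NormedModule)). now apply ex_RInt_of_ex_derive.
Qed.

End Corrector.

Section CellProblem.

Variables (G V Hbar : R -> R) (f : R -> R -> R).

Lemma Hbar_gt_of_supersolution (psi c : R) (u : R -> R) :
  cell_solution G V Hbar f psi ->
  (forall x, ex_derive u x) -> periodic1 u -> RInt u 0 1 = psi ->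
  (forall x, 0 <= x <= 2 -> c < Derive u x + G (u x) + V x) -> c < Hbar psi.
Proof.
  intros [Hper [[Hfd _] [Hmean Hcell]]] Hud Huper Humean Hsuper.
  destruct (periodic_zero_mean_downcrossing (fun x => u x - f psi x))
    as [z [Hz [Hdz HDz]]].
  - intro x. apply (ex_derive_minus u (f psi)); auto.
  - intro x. now rewrite Huper, Hper.
  - rewrite (RInt_minus u (f psi)) by now apply ex_RInt_of_ex_derive.
    rewrite Humean, Hmean. apply Rminus_diag.
  - rewrite Derive_minus in HDz by auto.
    specialize (Hsuper z Hz). specialize (Hcell z).
    replace (u z) with (f psi z) in Hsuper by lra. lra.
Qed.

Lemma Hbar_lt_of_subsolution (psi c : R) (u : R -> R) :
  cell_solution G V Hbar f psi ->
  (forall x, ex_derive u x) -> periodic1 u -> RInt u 0 1 = psi ->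
  (forall x, 0 <= x <= 2 -> Derive u x + G (u x) + V x < c) -> Hbar psi < c.
Proof.
  intros [Hper [[Hfd _] [Hmean Hcell]]] Hud Huper Humean Hsub.
  destruct (periodic_zero_mean_downcrossing (fun x => f psi x - u x))
    as [z [Hz [Hdz HDz]]].
  - intro x. apply (ex_derive_minus (f psi) u); auto.
  - intro x. now rewrite Huper, Hper.
  - rewrite (RInt_minus (f psi) u) by now apply ex_RInt_of_ex_derive.
    rewrite Humean, Hmean. apply Rminus_diag.
  - rewrite Derive_minus in HDz by auto.
    specialize (Hsub z Hz). specialize (Hcell z).
    replace (u z) with (f psi z) in Hsub by lra. lra.
Qed.

Hypothesis HG : is_C1 G.
Hypothesis Hcs : forall t, cell_solution G V Hbar f t.

Lemma Hbar_translate_close (psi c eps : R) :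
  (forall t, 0 <= t <= 2 -> Rabs (G (f psi t + c) - G (f psi t)) < eps) ->
  Rabs (Hbar (psi + c) - Hbar psi) < eps.
Proof.
  intro Hclose.
  destruct (Hcs psi) as [Hper [[Hfd _] [Hmean Hcell]]].
  set (u := fun t => f psi t + c).
  assert (Hud : forall t, ex_derive u t)
    by (intro t; apply (ex_derive_plus (f psi)); auto_derive; auto).
  assert (HDu : forall t, Derive u t = Derive (f psi) t).
  { intro t. unfold u. rewrite Derive_plus, Derive_const by (auto; auto_derive; auto). ring. }
  assert (Huper : periodic1 u) by (intro t; unfold u; now rewrite Hper).
  assert (Humean : RInt u 0 1 = psi + c).
  { unfold u. rewrite (RInt_plus (V := R_CompleteNormedModule) (f psi) (fun _ => c)).
    - rewrite Hmean, RInt_const. change (psi + (1 - 0) * c = psi + c). ring.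
    - now apply ex_RInt_of_ex_derive.
    - apply ex_RInt_const. }
  assert (Hlevel : forall t, 0 <= t <= 2 ->
            Hbar psi - eps < Derive u t + G (u t) + V t < Hbar psi + eps).
  { intros t Ht. rewrite HDu. specialize (Hclose t Ht). specialize (Hcell t).
    apply Rabs_lt_between' in Hclose. unfold u. lra. }
  apply Rabs_lt_between'. split.
  - apply (Hbar_gt_of_supersolution _ _ u (Hcs _) Hud Huper Humean).
    intros t Ht. apply Hlevel, Ht.
  - apply (Hbar_lt_of_subsolution _ _ u (Hcs _) Hud Huper Humean).
    intros t Ht. apply Hlevel, Ht.
Qed.

Lemma Hbar_continuity : continuity Hbar.
Proof.
  intro psi. pose proof HG as [HGd _].
  destruct (Hcs psi) as [_ [[Hfd _] _]].
  destruct (bounded_on_segment (f psi) 0 2) as [M [HM Hbound]].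
  { intro t. apply (ex_derive_continuous (f psi)), Hfd. }
  intros eps Heps.
  destruct (uniform_continuity_on_segment G (- M - 1) (M + 1) eps) as [del [Hdel Hunif]];
    [intro y; apply (ex_derive_continuous G), HGd | exact Heps |].
  exists (Rmin del 1). split; [apply Rmin_glb_lt; lra|].
  intros x [_ Hx]. simpl in Hx |- *. unfold R_dist in Hx |- *.
  pose proof (Rmin_l del 1). pose proof (Rmin_r del 1).
  assert (Hx' : psi - 1 < x < psi + 1) by (apply Rabs_lt_between'; lra).
  replace x with (psi + (x - psi)) by ring.
  apply Hbar_translate_close. intros t Ht.
  specialize (Hbound t Ht). apply Rabs_le_between in Hbound.
  apply Hunif; [lra | lra |].
  replace (f psi t + (x - psi) - f psi t) with (x - psi) by ring. lra.
Qed.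

Lemma perturbed_f_supersolution (th : R) :
  Ith G f th 1 <> 0 ->
  exists h0, 0 < h0 /\ forall h, 0 < h < h0 -> forall x, 0 <= x <= 2 ->
    Hbar th + h / 2 <
    Derive (perturbed_f G f th h) x + G (perturbed_f G f th h x) + V x.
Proof.
  intro HI.
  destruct (Hcs th) as [Hper [[Hfd _] [_ Hcell]]].
  set (s := sgn_th G f th). set (g := gth G f th).
  destruct (bounded_on_segment (f th) 0 2) as [Mf [HMf Hf_bd]].
  { intro x. apply (ex_derive_continuous (f th)), Hfd. }
  destruct (bounded_on_segment g 0 2) as [Mg [HMg Hg_bd]].
  { intro x. apply (ex_derive_continuous g). eexists. apply is_derive_gth; assumption. }
  destruct (uniform_first_order_expansion G (- Mf) Mf (1 / (4 * Mg)) HG)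
    as [del [Hdel Hexp]]; [apply Rdiv_lt_0_compat; lra|].
  exists (del / Mg). split; [now apply Rdiv_lt_0_compat|].
  intros h Hh x Hx.
  rewrite (is_derive_unique _ _ _ (is_derive_perturbed_f G f th HG Hfd h x)).
  unfold perturbed_f. fold s g.
  set (k := s * h * g x).
  assert (Hk : Rabs k <= h * Mg).
  { unfold k, s. rewrite !Rabs_mult, (Rabs_sgn_th G f th HI), (Rabs_pos_eq h) by lra.
    specialize (Hg_bd x Hx). nra. }
  assert (Hkdel : Rabs k < del).
  { apply Rle_lt_trans with (h * Mg); [exact Hk|].
    destruct Hh as [_ Hh]. apply Rmult_lt_compat_r with (r := Mg) in Hh; [|lra].
    now replace (del / Mg * Mg) with del in Hh by (field; lra). }
  specialize (Hf_bd x Hx). apply Rabs_le_between in Hf_bd.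
  specialize (Hexp (f th x) k Hf_bd Hkdel). apply Rabs_le_between in Hexp.
  assert (Herr : 1 / (4 * Mg) * Rabs k <= h / 4).
  { apply Rmult_le_compat_l with (r := 1 / (4 * Mg)) in Hk; [|left; apply Rdiv_lt_0_compat; lra].
    now replace (1 / (4 * Mg) * (h * Mg)) with (h / 4) in Hk by (field; lra). }
  (* The first-order terms cancel because g' + G'(f) g = s. *)
  replace (Derive (f th) x + s * h * (s - Derive G (f th x) * g x) + G (f th x + k) + V x)
    with (Derive (f th) x + G (f th x) + V x + s * s * h
          + (G (f th x + k) - G (f th x) - k * Derive G (f th x))) by (unfold k; ring).
  rewrite Hcell. unfold s. rewrite (sgn_th_sqr G f th HI). lra.
Qed.

Lemma Hbar_gt_along_gth (th : R) :
  Ith G f th 1 <> 0 ->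
  exists h0, 0 < h0 /\ forall h, 0 < h < h0 ->
    Hbar th + h / 2 < Hbar (th + sgn_th G f th * h * bth G f th).
Proof.
  intro HI.
  destruct (Hcs th) as [Hper [[Hfd _] [Hmean _]]].
  destruct (perturbed_f_supersolution th HI) as [h0 [Hh0 Hsuper]].
  exists h0. split; [exact Hh0|]. intros h Hh.
  apply (Hbar_gt_of_supersolution _ _ (perturbed_f G f th h) (Hcs _)).
  - intro x. eexists. apply is_derive_perturbed_f; assumption.
  - exact (perturbed_f_periodic G f th HG Hfd Hper HI h).
  - now rewrite RInt_perturbed_f, Hmean.
  - exact (Hsuper h Hh).
Qed.

End CellProblem.

Theorem lemma4p2 (G V Hbar : R -> R) (f : R -> R -> R) (th : R) :
  is_C1 G -> coercive G -> lipschitz V -> periodic1 V ->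
  (forall t, cell_solution G V Hbar f t) ->
  Ith G f th 1 <> 0 ->
  (0 < Ith G f th 1 ->
     exists h0, 0 < h0 /\ forall h, 0 < h < h0 ->
       exists ths, th < ths < th + h * bth G f th /\
         Hbar ths = Hbar th + h / 2 /\ Hbar th + h / 2 > Hbar th) /\
  (Ith G f th 1 < 0 ->
     exists h0, 0 < h0 /\ forall h, 0 < h < h0 ->
       exists ths, th - h * bth G f th < ths < th /\
         Hbar ths = Hbar th + h / 2 /\ Hbar th + h / 2 > Hbar th).
Proof.
  (* Coercivity of G and the assumptions on V are only needed to construct the cell
     solutions, which are given here. *)
  intros HG _ _ _ Hcs HI.
  destruct (Hcs th) as [_ [[Hfd _] _]].
  pose proof (bth_pos G f th HG Hfd HI) as Hb.
  assert (Hc : forall x, continuous Hbar x)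
    by (intro; apply continuity_pt_filterlim, (Hbar_continuity G V Hbar f HG Hcs)).
  destruct (Hbar_gt_along_gth G V Hbar f HG Hcs th HI) as [h0 [Hh0 Hgt]].
  split; intro Hsign; exists h0; split; try exact Hh0; intros h Hh;
    specialize (Hgt h Hh); pose proof (Rmult_lt_0_compat h _ (proj1 Hh) Hb) as Hhb.
  - assert (Hs : sgn_th G f th = 1) by (unfold sgn_th; destruct Rlt_dec; lra).
    rewrite Hs, Rmult_1_l in Hgt.
    destruct (IVT_strict Hbar th (th + h * bth G f th) (Hbar th + h / 2) Hc)
      as [ths [Hths Hval]]; [lra | left; lra |].
    exists ths. split; [exact Hths | split; [exact Hval | lra]].
  - assert (Hs : sgn_th G f th = -1) by (unfold sgn_th; destruct Rlt_dec; lra).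
    replace (th + sgn_th G f th * h * bth G f th) with (th - h * bth G f th) in Hgt
      by (rewrite Hs; ring).
    destruct (IVT_strict Hbar (th - h * bth G f th) th (Hbar th + h / 2) Hc)
      as [ths [Hths Hval]]; [lra | right; lra |].
    exists ths. split; [exact Hths | split; [exact Hval | lra]].
Qed.
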